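(* In the simply typed distributive $\lambda$-calculus, if $\Gamma\vdash t:A$ and $t\to_{\mathsf{dist}} s$, then $\Gamma\vdash s:A$.
   Context: Terms: $t,s,u ::= x \mid \lambda x.t \mid ts \mid \langle t,s\rangle \mid \pi_1 t \mid \pi_2 t$ (up to $\alpha$-renaming); $t\{x:=s\}$ is capture-avoiding substitution. Top-level rules: $(\lambda x.t)s \mapsto t\{x:=s\}$; $\pi_i\langle t_1,t_2\rangle \mapsto t_i$ ($i=1,2$); $\langle t,s\rangle u \mapsto \langle tu, su\rangle$; $\pi_i(\lambda x.t)\mapsto \lambda x.\pi_i t$ ($i=1,2$); $\to_{\mathsf{dist}}$ is the closure of these rules under all term constructors. Types: $A ::= \tau \mid A\Rightarrow A \mid A\wedge A$ with $\tau$ a single atomic type. The relation $\equiv$ on types is the smallest equivalence relation containing $A\Rightarrow (B\wedge C)\equiv (A\Rightarrow B)\wedge(A\Rightarrow C)$ for all $A,B,C$ and closed under congruence for $\Rightarrow$ and $\wedge$ in both arguments. Typing rules: $\Gamma,x:A\vdash x:A$; if $\Gamma\vdash t:A$ and $A\equiv B$ then $\Gamma\vdash t:B$; if $\Gamma,x:A\vdash t:B$ then $\Gamma\vdash \lambda x.t:A\Rightarrow B$; if $\Gamma\vdash t:A\Rightarrow B$ and $\Gamma\vdash s:A$ then $\Gamma\vdash ts:B$; if $\Gamma\vdash t:A$ and $\Gamma\vdash s:B$ then $\Gamma\vdash\langle t,s\rangle:A\wedge B$; if $\Gamma\vdash t:A\wedge B$ then $\Gamma\vdash\pi_1 t:A$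 and $\Gamma\vdash \pi_2 t:B$. *)

(* Simply typed distributive lambda-calculus.
   Terms are represented with de Bruijn indices, so terms are identified up to
   alpha-renaming and substitution is capture-avoiding by construction. *)
From Stdlib Require Import List Arith.
Import ListNotations.

Inductive term : Type :=
| Var : nat -> term
| Lam : term -> term
| App : term -> term -> term
| Pair : term -> term -> term
| Proj1 : term -> term
| Proj2 : term -> term.

Fixpoint lift (k c : nat) (t : term) : term :=
  match t with
  | Var n => if Nat.ltb n c then Var n else Var (n + k)
  | Lam t => Lam (lift k (S c) t)
  | App t s => App (lift k c t) (lift k c s)
  | Pair t s => Pair (lift k c t) (lift k c s)
  | Proj1 t => Proj1 (lift k c t)
  | Proj2 t => Proj2 (lift k c t)
  end.

(* subst j s t : substitute s for index j in t, decrementing indices > j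
   (the binder being eliminated). *)
Fixpoint subst (j : nat) (s : term) (t : term) : term :=
  match t with
  | Var n =>
      if Nat.eqb n j then lift j 0 s
      else if Nat.ltb j n then Var (pred n) else Var n
  | Lam t => Lam (subst (S j) s t)
  | App t1 t2 => App (subst j s t1) (subst j s t2)
  | Pair t1 t2 => Pair (subst j s t1) (subst j s t2)
  | Proj1 t => Proj1 (subst j s t)
  | Proj2 t => Proj2 (subst j s t)
  end.

(* t{x:=s} for the outermost bound variable x (index 0). *)
Definition subst0 (t s : term) : term := subst 0 s t.

Inductive top_step : term -> term -> Prop :=
| ts_beta : forall t s, top_step (App (Lam t) s) (subst0 t s)
| ts_proj1 : forall t1 t2, top_step (Proj1 (Pair t1 t2)) t1
| ts_proj2 : forall t1 t2, top_step (Proj2 (Pair t1 t2)) t2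
| ts_app_pair : forall t s u, top_step (App (Pair t s) u) (Pair (App t u) (App s u))
| ts_proj1_lam : forall t, top_step (Proj1 (Lam t)) (Lam (Proj1 t))
| ts_proj2_lam : forall t, top_step (Proj2 (Lam t)) (Lam (Proj2 t)).

Inductive dist_step : term -> term -> Prop :=
| ds_top : forall t s, top_step t s -> dist_step t s
| ds_lam : forall t t', dist_step t t' -> dist_step (Lam t) (Lam t')
| ds_appl : forall t t' s, dist_step t t' -> dist_step (App t s) (App t' s)
| ds_appr : forall t s s', dist_step s s' -> dist_step (App t s) (App t s')
| ds_pairl : forall t t' s, dist_step t t' -> dist_step (Pair t s) (Pair t' s)
| ds_pairr : forall t s s', dist_step s s' -> dist_step (Pair t s) (Pair t s')
| ds_proj1 : forall t t', dist_step t t' -> dist_step (Proj1 t) (Proj1 t')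
| ds_proj2 : forall t t', dist_step t t' -> dist_step (Proj2 t) (Proj2 t').

Inductive ty : Type :=
| Tau : ty
| Arr : ty -> ty -> ty
| And : ty -> ty -> ty.

Inductive ty_equiv : ty -> ty -> Prop :=
| te_dist : forall A B C, ty_equiv (Arr A (And B C)) (And (Arr A B) (Arr A C))
| te_refl : forall A, ty_equiv A A
| te_sym : forall A B, ty_equiv A B -> ty_equiv B A
| te_trans : forall A B C, ty_equiv A B -> ty_equiv B C -> ty_equiv A C
| te_arr : forall A A' B B', ty_equiv A A' -> ty_equiv B B' ->
    ty_equiv (Arr A B) (Arr A' B')
| te_and : forall A A' B B', ty_equiv A A' -> ty_equiv B B' ->
    ty_equiv (And A B) (And A' B').

(* Contexts: list of types, index 0 = most recently bound variable. *)
Definition ctx := list ty.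

Inductive typing : ctx -> term -> ty -> Prop :=
| ty_var : forall G n A, nth_error G n = Some A -> typing G (Var n) A
| ty_equivr : forall G t A B, typing G t A -> ty_equiv A B -> typing G t B
| ty_lam : forall G t A B, typing (A :: G) t B -> typing G (Lam t) (Arr A B)
| ty_app : forall G t s A B, typing G t (Arr A B) -> typing G s A ->
    typing G (App t s) B
| ty_pair : forall G t s A B, typing G t A -> typing G s B ->
    typing G (Pair t s) (And A B)
| ty_proj1 : forall G t A B, typing G t (And A B) -> typing G (Proj1 t) A
| ty_proj2 : forall G t A B, typing G t (And A B) -> typing G (Proj2 t) B.

(* Type equivalence is decided by the normal form that distributes arrows over
   conjunctions. Comparing normal forms shows that [Arr] and [And] are injective
   up to equivalence, and that an arrow equivalent to a conjunction has a
   codomain equivalent to a conjunction whose components match the two halves.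
   With generation lemmas that absorb the conversion rule, each top-level rule
   then preserves types, using the substitution lemma for beta. *)
From Stdlib Require Import List Arith Lia.
Import ListNotations.

Fixpoint distr (X Y : ty) : ty :=
  match Y with
  | And P Q => And (distr X P) (distr X Q)
  | _ => Arr X Y
  end.

Fixpoint nf (A : ty) : ty :=
  match A with
  | Tau => Tau
  | Arr A B => distr (nf A) (nf B)
  | And A B => And (nf A) (nf B)
  end.

Lemma ty_equiv_distr X Y : ty_equiv (Arr X Y) (distr X Y).
Proof.
  revert X; induction Y; intros X; simpl; try apply te_refl.
  eapply te_trans; [apply te_dist | apply te_and; auto].
Qed.

Lemma ty_equiv_nf A : ty_equiv A (nf A).
Proof.
  induction A; simpl.
  - apply te_refl.
  - eapply te_trans; [apply te_arr; eauto | apply ty_equiv_distr].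
  - apply te_and; auto.
Qed.

Lemma nf_ty_equiv A B : ty_equiv A B -> nf A = nf B.
Proof. induction 1; simpl; congruence. Qed.

Lemma nf_eq_ty_equiv A B : nf A = nf B -> ty_equiv A B.
Proof.
  intros E. eapply te_trans; [apply ty_equiv_nf|].
  rewrite E. apply te_sym, ty_equiv_nf.
Qed.

Lemma nf_idem A : nf (nf A) = nf A.
Proof. apply nf_ty_equiv, te_sym, ty_equiv_nf. Qed.

Lemma distr_inj X Y X' Y' : distr X Y = distr X' Y' -> X = X' /\ Y = Y'.
Proof.
  revert X X' Y'; induction Y; intros X X' Y' E; destruct Y'; simpl in E;
    try discriminate; try (inversion E; subst; auto; fail).
  injection E as E1 E2.
  destruct (IHY1 _ _ _ E1), (IHY2 _ _ _ E2). subst. auto.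
Qed.

Lemma distr_And X Y P Q : distr X Y = And P Q ->
  exists Y1 Y2, Y = And Y1 Y2 /\ P = distr X Y1 /\ Q = distr X Y2.
Proof. destruct Y; simpl; intros E; try discriminate. injection E as <- <-; eauto. Qed.

Lemma ty_equiv_Arr_inv A B A' B' : ty_equiv (Arr A B) (Arr A' B') ->
  ty_equiv A A' /\ ty_equiv B B'.
Proof.
  intros E. apply nf_ty_equiv in E. simpl in E.
  destruct (distr_inj _ _ _ _ E). split; apply nf_eq_ty_equiv; auto.
Qed.

Lemma ty_equiv_And_inv A B A' B' : ty_equiv (And A B) (And A' B') ->
  ty_equiv A A' /\ ty_equiv B B'.
Proof.
  intros E. apply nf_ty_equiv in E. simpl in E. injection E as E1 E2.
  split; apply nf_eq_ty_equiv; auto.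
Qed.

Lemma ty_equiv_Arr_And_inv X A P Q : ty_equiv (Arr X A) (And P Q) ->
  exists A1 A2, ty_equiv A (And A1 A2) /\ ty_equiv P (Arr X A1) /\ ty_equiv Q (Arr X A2).
Proof.
  intros E. apply nf_ty_equiv in E. simpl in E.
  destruct (distr_And _ _ _ _ E) as (A1 & A2 & EA & EP & EQ).
  assert (Hnf : And (nf A1) (nf A2) = And A1 A2).
  { change (nf (And A1 A2) = And A1 A2). rewrite <- EA. apply nf_idem. }
  injection Hnf as N1 N2.
  exists A1, A2. repeat split.
  - rewrite <- EA. apply ty_equiv_nf.
  - apply nf_eq_ty_equiv. simpl. rewrite N1. auto.
  - apply nf_eq_ty_equiv. simpl. rewrite N2. auto.
Qed.

Lemma typing_Lam_inv {G t T} : typing G (Lam t) T ->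
  exists A B, typing (A :: G) t B /\ ty_equiv (Arr A B) T.
Proof.
  intros H. remember (Lam t) as u eqn:Eu. revert t Eu.
  induction H; intros t0 Eu; try discriminate.
  - destruct (IHtyping _ Eu) as (A' & B' & Hb & E).
    exists A', B'. split; [exact Hb | eapply te_trans; eauto].
  - injection Eu as <-. exists A, B. split; [exact H | apply te_refl].
Qed.

Lemma typing_App_inv {G t s T} : typing G (App t s) T ->
  exists A, typing G t (Arr A T) /\ typing G s A.
Proof.
  intros H. remember (App t s) as u eqn:Eu. revert t s Eu.
  induction H; intros t0 s0 Eu; try discriminate.
  - destruct (IHtyping _ _ Eu) as (A' & Ht & Hs).
    exists A'. split; [|exact Hs].
    eapply ty_equivr; [exact Ht | apply te_arr; [apply te_refl | exact H0]].
  - injection Eu as <- <-. eauto.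
Qed.

Lemma typing_Pair_inv {G t s T} : typing G (Pair t s) T ->
  exists A B, typing G t A /\ typing G s B /\ ty_equiv (And A B) T.
Proof.
  intros H. remember (Pair t s) as u eqn:Eu. revert t s Eu.
  induction H; intros t0 s0 Eu; try discriminate.
  - destruct (IHtyping _ _ Eu) as (A' & B' & Ht & Hs & E).
    exists A', B'. repeat split; auto. eapply te_trans; eauto.
  - injection Eu as <- <-. exists A, B. repeat split; auto. apply te_refl.
Qed.

Lemma typing_Proj1_inv {G t T} : typing G (Proj1 t) T ->
  exists B, typing G t (And T B).
Proof.
  intros H. remember (Proj1 t) as u eqn:Eu. revert t Eu.
  induction H; intros t0 Eu; try discriminate.
  - destruct (IHtyping _ Eu) as (B' & Ht).
    exists B'. eapply ty_equivr; [exact Ht | apply te_and; [exact H0 | apply te_refl]].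
  - injection Eu as <-. eauto.
Qed.

Lemma typing_Proj2_inv {G t T} : typing G (Proj2 t) T ->
  exists A, typing G t (And A T).
Proof.
  intros H. remember (Proj2 t) as u eqn:Eu. revert t Eu.
  induction H; intros t0 Eu; try discriminate.
  - destruct (IHtyping _ Eu) as (A' & Ht).
    exists A'. eapply ty_equivr; [exact Ht | apply te_and; [apply te_refl | exact H0]].
  - injection Eu as <-. eauto.
Qed.

Lemma typing_lift G1 D G t A : typing (G1 ++ G) t A ->
  typing (G1 ++ D ++ G) (lift (length D) (length G1) t) A.
Proof.
  intros H. remember (G1 ++ G) as G0 eqn:E. revert G1 E.
  induction H; intros G1 E; subst; simpl.
  - destruct (Nat.ltb_spec n (length G1)); apply ty_var.
    + rewrite nth_error_app1 in * by lia. exact H.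
    + rewrite nth_error_app2 in H by lia.
      rewrite !nth_error_app2 by lia.
      replace (n + length D - length G1 - length D) with (n - length G1) by lia.
      exact H.
  - eapply ty_equivr; eauto.
  - apply ty_lam. apply (IHtyping (A :: G1)). reflexivity.
  - eapply ty_app; eauto.
  - apply ty_pair; eauto.
  - eapply ty_proj1; eauto.
  - eapply ty_proj2; eauto.
Qed.

Lemma typing_subst G1 B G t s A : typing (G1 ++ B :: G) t A -> typing G s B ->
  typing (G1 ++ G) (subst (length G1) s t) A.
Proof.
  intros H Hs. remember (G1 ++ B :: G) as G0 eqn:E. revert G1 E.
  induction H; intros G1 E; subst; simpl.
  - destruct (Nat.eqb_spec n (length G1)) as [->|Hne].
    + rewrite nth_error_app2, Nat.sub_diag in H by lia.
      injection H as <-. exact (typing_lift [] G1 G s B Hs).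
    + destruct (Nat.ltb_spec (length G1) n); apply ty_var.
      * rewrite nth_error_app2 in * by lia.
        replace (n - length G1) with (S (pred n - length G1)) in H by lia.
        exact H.
      * rewrite nth_error_app1 in * by lia. exact H.
  - eapply ty_equivr; eauto.
  - apply ty_lam. apply (IHtyping (A :: G1)). reflexivity.
  - eapply ty_app; eauto.
  - apply ty_pair; eauto.
  - eapply ty_proj1; eauto.
  - eapply ty_proj2; eauto.
Qed.

Lemma typing_subst0 G t s A B : typing (B :: G) t A -> typing G s B ->
  typing G (subst0 t s) A.
Proof. apply (typing_subst []). Qed.

Lemma top_step_preserves_typing G t s T : typing G t T -> top_step t s -> typing G s T.
Proof.
  intros Ht Hstep. destruct Hstep.
  - destruct (typing_App_inv Ht) as (A & Hlam & Hs).
    destruct (typing_Lam_inv Hlam) as (A' & B & Hb & E).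
    destruct (ty_equiv_Arr_inv _ _ _ _ E) as [EA EB].
    eapply ty_equivr; [|exact EB].
    eapply typing_subst0; [exact Hb|].
    eapply ty_equivr; [exact Hs | apply te_sym, EA].
  - destruct (typing_Proj1_inv Ht) as (B & Hp).
    destruct (typing_Pair_inv Hp) as (A1 & A2 & H1 & _ & E).
    eapply ty_equivr; [exact H1 | apply (ty_equiv_And_inv _ _ _ _ E)].
  - destruct (typing_Proj2_inv Ht) as (A & Hp).
    destruct (typing_Pair_inv Hp) as (A1 & A2 & _ & H2 & E).
    eapply ty_equivr; [exact H2 | apply (ty_equiv_And_inv _ _ _ _ E)].
  - destruct (typing_App_inv Ht) as (A & Hp & Hu).
    destruct (typing_Pair_inv Hp) as (P & Q & H1 & H2 & E).
    destruct (ty_equiv_Arr_And_inv _ _ _ _ (te_sym _ _ E)) as (T1 & T2 & ET & EP & EQ).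
    eapply ty_equivr; [|apply te_sym, ET].
    apply ty_pair; (eapply ty_app; [eapply ty_equivr; eauto | exact Hu]).
  - destruct (typing_Proj1_inv Ht) as (B & Hl).
    destruct (typing_Lam_inv Hl) as (X & C & Hb & E).
    destruct (ty_equiv_Arr_And_inv _ _ _ _ E) as (C1 & C2 & EC & E1 & _).
    eapply ty_equivr; [|apply te_sym, E1].
    apply ty_lam. eapply ty_proj1. eapply ty_equivr; eauto.
  - destruct (typing_Proj2_inv Ht) as (A & Hl).
    destruct (typing_Lam_inv Hl) as (X & C & Hb & E).
    destruct (ty_equiv_Arr_And_inv _ _ _ _ E) as (C1 & C2 & EC & _ & E2).
    eapply ty_equivr; [|apply te_sym, E2].
    apply ty_lam. eapply ty_proj2. eapply ty_equivr; eauto.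
Qed.

Theorem theorem3 : forall (G : ctx) (t s : term) (A : ty),
  typing G t A -> dist_step t s -> typing G s A.
Proof.
  intros G t s A Ht Hstep. revert G A Ht.
  induction Hstep; intros G T Ht.
  - eapply top_step_preserves_typing; eauto.
  - destruct (typing_Lam_inv Ht) as (A & B & Hb & E).
    eapply ty_equivr; [apply ty_lam, IHHstep, Hb | exact E].
  - destruct (typing_App_inv Ht) as (A & H1 & H2). eapply ty_app; eauto.
  - destruct (typing_App_inv Ht) as (A & H1 & H2). eapply ty_app; eauto.
  - destruct (typing_Pair_inv Ht) as (A & B & H1 & H2 & E).
    eapply ty_equivr; [apply ty_pair; eauto | exact E].
  - destruct (typing_Pair_inv Ht) as (A & B & H1 & H2 & E).
    eapply ty_equivr; [apply ty_pair; eauto | exact E].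
  - destruct (typing_Proj1_inv Ht) as (B & H1). eapply ty_proj1; eauto.
  - destruct (typing_Proj2_inv Ht) as (A & H1). eapply ty_proj2; eauto.
Qed.
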